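(* The plane cannot be tiled by copies of the tooth alone, where the tooth is the $9$-omino consisting of a central unit square together with two unit squares extending in a straight line from it in each of the four directions (up, down, left, right).
   Context: The tooth is the plus-shaped $9$-omino: with centre square $[0,1]\times[0,1]$, it consists of the squares $[i,i+1]\times[0,1]$ for $i\in\{-2,-1,0,1,2\}$ and $[0,1]\times[j,j+1]$ for $j\in\{-2,-1,1,2\}$. A tiling of the plane by copies of a polyomino is a covering of $\mathbb{R}^2$ by copies with pairwise disjoint interiors. *)

From Stdlib Require Import Reals.
Open Scope R_scope.

Definition point := (R * R)%type.

Definition dist2 (p q : point) : R :=
  (fst p - fst q) ^ 2 + (snd p - snd q) ^ 2.

Definition unit_square (a b : R) (p : point) : Prop :=
  a <= fst p <= a + 1 /\ b <= snd p <= b + 1.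

Definition tooth (p : point) : Prop :=
  unit_square (-2) 0 p \/ unit_square (-1) 0 p \/ unit_square 0 0 p \/
  unit_square 1 0 p \/ unit_square 2 0 p \/
  unit_square 0 (-2) p \/ unit_square 0 (-1) p \/
  unit_square 0 1 p \/ unit_square 0 2 p.

Definition isometry (f : point -> point) : Prop :=
  forall p q, dist2 (f p) (f q) = dist2 p q.

Definition image (f : point -> point) (A : point -> Prop) (p : point) : Prop :=
  exists q, A q /\ f q = p.

Definition interior (A : point -> Prop) (p : point) : Prop :=
  exists eps, 0 < eps /\ forall q, dist2 p q < eps ^ 2 -> A q.

Definition tiles_plane (tile : point -> Prop) : Prop :=
  exists (I : Type) (f : I -> point -> point),
    (forall i, isometry (f i)) /\
    (forall p, exists i, image (f i) tile p) /\
    (forall i j p, i <> j ->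
       interior (image (f i) tile) p -> interior (image (f j) tile) p -> False).

(* Move the tiling so that one tile is the standard tooth.  Call a lattice point c walled if every
   tile meeting the unit cell with lower-left corner c has, near c, its interior in the closed
   quadrant above and to the right of c.  Tiles are closed and locally finite (their centres are 1/2
   apart), so some tile contains c and meets the cell arbitrarily near c.  At the preimage of c this
   tile maps a unit square of the tooth into the quadrant; this forces the preimage to be a corner
   of the square and the linear part of the isometry to be a symmetry of the square lattice, so the
   tile is a lattice translate of the tooth covering the cell of c (the tooth is symmetric about the
   centre of its middle square).  Next to the standard tooth the corner (1,1) is walled, so the cell
   (1,1) is covered by the translate by (3,1) or, up to the diagonal reflection, by (1,3).  In the
   first case the corner (1,2) is walled and forces the translate by (1,4); then the corner (2,2) is
   walled, but every translate covering the cell (2,2) overlaps a tile already placed. *)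

From Stdlib Require Import Reals Lra Lia Psatz ZArith Classical.
Open Scope R_scope.

(** * Isometries of the plane *)

Definition orthonormal (u1 u2 v1 v2 : R) : Prop :=
  u1 * u1 + u2 * u2 = 1 /\ v1 * v1 + v2 * v2 = 1 /\ u1 * v1 + u2 * v2 = 0.

Lemma orthonormal_transpose u1 u2 v1 v2 :
  orthonormal u1 u2 v1 v2 -> orthonormal u1 v1 u2 v2.
Proof.
  intros [Hu [Hv Huv]].
  assert (E1 : u1 * u1 = v2 * v2).
  { assert (u1 * v1 * (u1 * v1) = u2 * v2 * (u2 * v2)) by
      (replace (u1 * v1) with (- (u2 * v2)) by lra; ring).
    nra. }
  assert (E2 : u2 * u2 = v1 * v1) by lra.
  set (s := u1 * u2 + v1 * v2).
  assert (S1 : u1 * s = 0).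
  { unfold s. replace (u1 * (u1 * u2 + v1 * v2)) with (u2 * (u1 * u1) + v2 * (u1 * v1)) by ring.
    rewrite E1. replace (u1 * v1) with (- (u2 * v2)) by lra. ring. }
  assert (S2 : u2 * s = 0).
  { unfold s. replace (u2 * (u1 * u2 + v1 * v2)) with (u1 * (u2 * u2) + v1 * (u2 * v2)) by ring.
    rewrite E2. replace (u2 * v2) with (- (u1 * v1)) by lra. ring. }
  split; [lra | split; [lra |]].
  assert (Hs : s = u1 * (u1 * s) + u2 * (u2 * s)).
  { transitivity ((u1 * u1 + u2 * u2) * s); [rewrite Hu |]; ring. }
  change (s = 0). rewrite Hs, S1, S2. ring.
Qed.

Lemma isometry_affine f : isometry f ->
  exists b1 b2 u1 u2 v1 v2, orthonormal u1 u2 v1 v2 /\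
    forall p, f p = (b1 + fst p * u1 + snd p * v1, b2 + fst p * u2 + snd p * v2).
Proof.
  intros Hf.
  destruct (f (0, 0)) as [b1 b2] eqn:F0.
  destruct (f (1, 0)) as [e1 e2] eqn:F1.
  destruct (f (0, 1)) as [g1 g2] eqn:F2.
  pose proof (Hf (1, 0) (0, 0)) as D10. pose proof (Hf (0, 1) (0, 0)) as D01.
  pose proof (Hf (1, 0) (0, 1)) as D11.
  rewrite F0, F1, F2 in *. unfold dist2 in *; simpl in *.
  set (u1 := e1 - b1); set (u2 := e2 - b2); set (v1 := g1 - b1); set (v2 := g2 - b2).
  assert (Horth : orthonormal u1 u2 v1 v2) by (unfold u1, u2, v1, v2; repeat split; nra).
  exists b1, b2, u1, u2, v1, v2. split; [exact Horth |].
  destruct (orthonormal_transpose _ _ _ _ Horth) as [R1 [R2 R3]].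
  intros [x y]. simpl.
  pose proof (Hf (x, y) (0, 0)) as G0. pose proof (Hf (x, y) (1, 0)) as G1.
  pose proof (Hf (x, y) (0, 1)) as G2.
  rewrite F0 in G0. rewrite F1 in G1. rewrite F2 in G2.
  destruct (f (x, y)) as [w1 w2]. unfold dist2 in *; simpl in *.
  (* the coordinates of [f (x,y) - f (0,0)] in the orthonormal frame [u, v] are [x] and [y] *)
  assert (Du : (w1 - b1) * u1 + (w2 - b2) * u2 = x) by (unfold u1, u2; nra).
  assert (Dv : (w1 - b1) * v1 + (w2 - b2) * v2 = y) by (unfold v1, v2; nra).
  rewrite <- Du, <- Dv. f_equal.
  - transitivity (b1 + (w1 - b1) * (u1 * u1 + v1 * v1) + (w2 - b2) * (u1 * u2 + v1 * v2));
      [rewrite R1, R3 | ]; ring.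
  - transitivity (b2 + (w2 - b2) * (u2 * u2 + v2 * v2) + (w1 - b1) * (u1 * u2 + v1 * v2));
      [rewrite R2, R3 | ]; ring.
Qed.

Definition inverses (f g : point -> point) : Prop :=
  (forall p, f (g p) = p) /\ (forall p, g (f p) = p).

Lemma isometry_inverse f : isometry f -> exists g, isometry g /\ inverses f g.
Proof.
  intros Hf.
  destruct (isometry_affine f Hf) as [b1 [b2 [u1 [u2 [v1 [v2 [Horth Hfp]]]]]]].
  pose proof Horth as [Hu [Hv Huv]].
  destruct (orthonormal_transpose _ _ _ _ Horth) as [R1 [R2 R3]].
  set (g := fun w : point => ((fst w - b1) * u1 + (snd w - b2) * u2,
                              (fst w - b1) * v1 + (snd w - b2) * v2)).
  assert (Hfg : forall p, f (g p) = p).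
  { intros [x y]. rewrite Hfp. unfold g; simpl. f_equal.
    - transitivity (b1 + (x - b1) * (u1 * u1 + v1 * v1) + (y - b2) * (u1 * u2 + v1 * v2));
        [ring | rewrite R1, R3; ring].
    - transitivity (b2 + (y - b2) * (u2 * u2 + v2 * v2) + (x - b1) * (u1 * u2 + v1 * v2));
        [ring | rewrite R2, R3; ring]. }
  exists g. split; [| split; [exact Hfg |]].
  - intros p q. rewrite <- (Hf (g p) (g q)), !Hfg. reflexivity.
  - intros [x y]. rewrite Hfp. unfold g; simpl. f_equal.
    + transitivity (x * (u1 * u1 + u2 * u2) + y * (u1 * v1 + u2 * v2));
        [ring | rewrite Hu, Huv; ring].
    + transitivity (y * (v1 * v1 + v2 * v2) + x * (u1 * v1 + u2 * v2));
        [ring | rewrite Hv, Huv; ring].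
Qed.

Lemma dist2_sym p q : dist2 p q = dist2 q p.
Proof. unfold dist2. ring. Qed.

Lemma sum_squares_lt a b e : 0 < e -> a * a + b * b < e * e -> - e < a < e /\ - e < b < e.
Proof. intros. split; split; nra. Qed.

Lemma dist2_lt_coords p q e : 0 < e -> dist2 p q < e ^ 2 ->
  - e < fst p - fst q < e /\ - e < snd p - snd q < e.
Proof.
  unfold dist2. intros He H.
  assert (H' : (fst p - fst q) * (fst p - fst q) + (snd p - snd q) * (snd p - snd q) < e * e)
    by (simpl in H; lra).
  exact (sum_squares_lt _ _ _ He H').
Qed.

Lemma dist2_triangle4 p q w s : dist2 p q < s -> dist2 q w < s -> dist2 p w < 4 * s.
Proof.
  unfold dist2. intros H1 H2.
  replace (fst p - fst w) with ((fst p - fst q) + (fst q - fst w)) by ring.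
  replace (snd p - snd w) with ((snd p - snd q) + (snd q - snd w)) by ring.
  generalize (fst p - fst q) (snd p - snd q) (fst q - fst w) (snd q - snd w) H1 H2.
  intros a b a' b' Ha Hb.
  pose proof (pow2_ge_0 (a - a')). pose proof (pow2_ge_0 (b - b')). nra.
Qed.

Definition open_box (a b c d : R) (p : point) : Prop :=
  a < fst p < b /\ c < snd p < d.

Lemma open_box_ball a b c d w : open_box a b c d w ->
  exists e, 0 < e /\ forall q, dist2 w q < e ^ 2 -> open_box a b c d q.
Proof.
  intros [[Ha Hb] [Hc Hd]].
  set (e := Rmin (Rmin (fst w - a) (b - fst w)) (Rmin (snd w - c) (d - snd w))).
  assert (He : 0 < e) by (unfold e; repeat apply Rmin_pos; lra).
  assert (E1 : e <= fst w - a) by (unfold e; eapply Rle_trans; apply Rmin_l).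
  assert (E2 : e <= b - fst w) by (unfold e; eapply Rle_trans; [apply Rmin_l | apply Rmin_r]).
  assert (E3 : e <= snd w - c) by (unfold e; eapply Rle_trans; [apply Rmin_r | apply Rmin_l]).
  assert (E4 : e <= d - snd w) by (unfold e; eapply Rle_trans; apply Rmin_r).
  exists e. split; [exact He |]. intros q Hq.
  destruct (dist2_lt_coords _ _ _ He Hq). unfold open_box. lra.
Qed.

Lemma interior_open (A : point -> Prop) (q : point) : interior A q ->
  exists e, 0 < e /\ forall q', dist2 q q' < e ^ 2 -> interior A q'.
Proof.
  intros [e [He Hball]]. exists (e / 2). split; [lra |].
  intros q' Hq'. exists (e / 2). split; [lra |].
  intros z Hz. apply Hball.
  replace (e ^ 2) with (4 * (e / 2) ^ 2) by field.
  exact (dist2_triangle4 _ _ _ _ Hq' Hz).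
Qed.

Lemma interval_approx a b x e : a < b -> a <= x <= b -> 0 < e ->
  exists x', a < x' < b /\ - e < x - x' < e.
Proof.
  intros Hab Hx He.
  set (h := Rmin e (b - a) / 3).
  assert (Hh : 0 < h /\ h <= e / 3 /\ h <= (b - a) / 3).
  { unfold h. pose proof (Rmin_l e (b - a)). pose proof (Rmin_r e (b - a)).
    assert (0 < Rmin e (b - a)) by (apply Rmin_pos; lra). lra. }
  destruct (Rlt_or_le (x + h) b).
  - exists (x + h). lra.
  - exists (x - h). lra.
Qed.

Definition closed_box (a b c d : R) (p : point) : Prop :=
  a <= fst p <= b /\ c <= snd p <= d.

Lemma closed_box_approx a b c d q e : a < b -> c < d -> closed_box a b c d q -> 0 < e ->
  exists q', open_box a b c d q' /\ dist2 q q' < e ^ 2.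
Proof.
  intros Hab Hcd [Hx Hy] He.
  destruct (interval_approx a b (fst q) (e / 2) Hab Hx) as [x' [Hx' Dx]]; [lra |].
  destruct (interval_approx c d (snd q) (e / 2) Hcd Hy) as [y' [Hy' Dy]]; [lra |].
  exists (x', y'). split; [split; assumption |].
  unfold dist2; simpl. nra.
Qed.

Lemma image_inverses f g (A : point -> Prop) p : inverses f g -> (image f A p <-> A (g p)).
Proof.
  intros [Hfg Hgf]. split.
  - intros [q [Aq <-]]. rewrite Hgf. exact Aq.
  - intros Ap. exists (g p). auto.
Qed.

Lemma interior_image f g (A : point -> Prop) r : isometry f -> inverses f g ->
  interior A r -> interior (image f A) (f r).
Proof.
  intros Hf Hinv [e [He Hball]]. exists e. split; [exact He |].
  intros q Hq. apply (image_inverses _ _ _ _ Hinv). apply Hball.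
  destruct Hinv as [Hfg _].
  rewrite <- (Hf r (g q)), Hfg. exact Hq.
Qed.

Lemma interior_image_inv f g (A : point -> Prop) p : isometry f -> inverses f g ->
  interior (image f A) p -> interior A (g p).
Proof.
  intros Hf Hinv [e [He Hball]]. exists e. split; [exact He |].
  intros q Hq. destruct Hinv as [Hfg Hgf].
  rewrite <- (Hgf q). apply (image_inverses f g); [split; assumption |].
  apply Hball. rewrite <- (Hfg p), Hf. exact Hq.
Qed.

Definition adherent (A : point -> Prop) (w : point) : Prop :=
  forall e, 0 < e -> exists r, A r /\ dist2 w r < e ^ 2.

Lemma adherent_or (A B : point -> Prop) w :
  adherent (fun p => A p \/ B p) w -> adherent A w \/ adherent B w.
Proof.
  intros H. apply NNPP. intros Hn. apply not_or_and in Hn as [HA HB].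
  apply not_all_ex_not in HA as [e1 HA]. apply not_all_ex_not in HB as [e2 HB].
  apply imply_to_and in HA as [He1 HA]. apply imply_to_and in HB as [He2 HB].
  destruct (H (Rmin e1 e2)) as [r [[Ar | Br] Hr]]; [apply Rmin_pos; lra | |].
  - apply HA. exists r. split; [exact Ar |].
    apply (Rlt_le_trans _ _ _ Hr), pow_incr. split; [left; apply Rmin_pos; lra | apply Rmin_l].
  - apply HB. exists r. split; [exact Br |].
    apply (Rlt_le_trans _ _ _ Hr), pow_incr. split; [left; apply Rmin_pos; lra | apply Rmin_r].
Qed.

Lemma adherent_closed_box a b c d w :
  adherent (closed_box a b c d) w -> closed_box a b c d w.
Proof.
  intros H.
  assert (Near : forall e, 0 < e -> exists r, closed_box a b c d r /\
            - e < fst w - fst r < e /\ - e < snd w - snd r < e).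
  { intros e He. destruct (H e He) as [r [Br Hr]]. exists r.
    split; [exact Br | exact (dist2_lt_coords _ _ _ He Hr)]. }
  unfold closed_box. repeat split; apply Rnot_lt_le; intros Hlt.
  - destruct (Near (a - fst w)) as [r [[[? ?] _] [[? ?] _]]]; lra.
  - destruct (Near (fst w - b)) as [r [[[? ?] _] [[? ?] _]]]; lra.
  - destruct (Near (c - snd w)) as [r [[_ [? ?]] [_ [? ?]]]]; lra.
  - destruct (Near (snd w - d)) as [r [[_ [? ?]] [_ [? ?]]]]; lra.
Qed.

Lemma tooth_bars p :
  tooth p <-> closed_box (-2) 3 0 1 p \/ closed_box 0 1 (-2) 3 p.
Proof. unfold tooth, unit_square, closed_box. split; intros; lra. Qed.

Lemma tooth_closed w : adherent tooth w -> tooth w.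
Proof.
  intros H. apply tooth_bars.
  assert (Hbars : adherent (fun p => closed_box (-2) 3 0 1 p \/ closed_box 0 1 (-2) 3 p) w).
  { intros e He. destruct (H e He) as [r [Tr Hr]]. exists r. rewrite <- tooth_bars. auto. }
  destruct (adherent_or _ _ _ Hbars) as [Hb | Hb]; [left | right];
    exact (adherent_closed_box _ _ _ _ _ Hb).
Qed.

Definition tooth_centre : point := (/ 2, / 2).

Lemma tooth_near_centre r : tooth r -> dist2 tooth_centre r < 9.
Proof.
  rewrite tooth_bars. unfold closed_box, dist2, tooth_centre; simpl. intros. nra.
Qed.

Lemma centre_ball_in_tooth r : dist2 tooth_centre r < 1 / 4 -> tooth r.
Proof.
  intros H. replace (1 / 4) with ((1 / 2) ^ 2) in H by field.
  apply dist2_lt_coords in H; [| lra]. unfold tooth_centre in H; simpl in H.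
  apply tooth_bars. unfold closed_box. lra.
Qed.

Lemma tooth_swap x y : tooth (y, x) <-> tooth (x, y).
Proof. rewrite !tooth_bars. unfold closed_box; simpl. split; intros; lra. Qed.

Lemma tooth_unit_square w : tooth w -> exists m n : Z,
  unit_square (IZR m) (IZR n) w /\ forall r, unit_square (IZR m) (IZR n) r -> tooth r.
Proof.
  intros Hw. unfold tooth in Hw.
  destruct Hw as [H | [H | [H | [H | [H | [H | [H | [H | H]]]]]]]];
    eexists _, _; (split; [exact H | unfold tooth; tauto]).
Qed.

Definition tooth_cell (i j : Z) : Prop :=
  ((j = 0 /\ -2 <= i <= 2) \/ (i = 0 /\ -2 <= j <= 2))%Z.

Definition open_square (a b : R) : point -> Prop := open_box a (a + 1) b (b + 1).

Lemma int_between (a k l : Z) x :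
  IZR a < x < IZR a + 1 -> IZR k <= x <= IZR l -> (k <= a < l)%Z.
Proof.
  intros Hx Hkl.
  assert (k < a + 1)%Z by (apply lt_IZR; rewrite plus_IZR; lra).
  assert (a < l)%Z by (apply lt_IZR; lra).
  lia.
Qed.

Lemma tooth_cell_of_open_square (a b : Z) w :
  tooth w -> open_square (IZR a) (IZR b) w -> tooth_cell a b.
Proof.
  rewrite tooth_bars. intros [[Hx Hy] | [Hx Hy]] [Ha Hb]; unfold tooth_cell.
  - pose proof (int_between _ (-2) 3 _ Ha Hx). pose proof (int_between _ 0 1 _ Hb Hy). lia.
  - pose proof (int_between _ 0 1 _ Ha Hx). pose proof (int_between _ (-2) 3 _ Hb Hy). lia.
Qed.

Definition open_bars (p : point) : Prop := open_box (-2) 3 0 1 p \/ open_box 0 1 (-2) 3 p.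

Lemma open_bars_of_tooth_cell (a b : Z) :
  tooth_cell a b -> open_bars (IZR a + / 2, IZR b + / 2).
Proof.
  unfold tooth_cell, open_bars, open_box; simpl.
  intros [[-> [H1 H2]] | [-> [H1 H2]]]; apply IZR_le in H1, H2; [left | right]; lra.
Qed.

(** * An isometry mapping a corner of a square into a quadrant *)

Lemma nonneg_of_ray a b : (forall t, 0 < t < 1 -> 0 <= a + t * b) -> 0 <= a.
Proof.
  intros H. apply Rnot_lt_le. intros Ha.
  set (t := Rmin (1 / 2) (- a / (2 * (Rabs b + 1)))).
  assert (Hb : 0 < Rabs b + 1) by (pose proof (Rabs_pos b); lra).
  assert (Ht : 0 < t) by (apply Rmin_pos; [lra | apply Rdiv_lt_0_compat; lra]).
  assert (Ht1 : t <= 1 / 2) by apply Rmin_l.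
  assert (Ht2 : t * (Rabs b + 1) <= - a / 2).
  { apply (Rmult_le_reg_r (/ (Rabs b + 1))); [apply Rinv_0_lt_compat; lra |].
    replace (t * (Rabs b + 1) * / (Rabs b + 1)) with t by (field; lra).
    replace (- a / 2 * / (Rabs b + 1)) with (- a / (2 * (Rabs b + 1))) by (field; lra).
    apply Rmin_r. }
  assert (t * b <= t * Rabs b) by (apply Rmult_le_compat_l; [lra | apply Rle_abs]).
  specialize (H t ltac:(lra)). lra.
Qed.

Lemma nonneg_of_small_combinations a b d : 0 < d ->
  (forall h k, 0 < h < d -> 0 < k < d -> 0 <= h * a + k * b) -> 0 <= a /\ 0 <= b.
Proof.
  intros Hd H. split.
  - apply (nonneg_of_ray a b). intros t Ht.
    specialize (H (d / 2) (t * (d / 2)) ltac:(lra) ltac:(nra)).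
    replace (d / 2 * a + t * (d / 2) * b) with (d / 2 * (a + t * b)) in H by ring. nra.
  - apply (nonneg_of_ray b a). intros t Ht.
    specialize (H (t * (d / 2)) (d / 2) ltac:(nra) ltac:(lra)).
    replace (t * (d / 2) * a + d / 2 * b) with (d / 2 * (b + t * a)) in H by ring. nra.
Qed.

Definition inward (m x0 s : R) : Prop :=
  exists d, 0 < d /\ forall h, 0 < h < d -> m < x0 + s * h < m + 1.

Lemma inward_plus m x0 : m <= x0 < m + 1 -> inward m x0 1.
Proof. intros H. exists (m + 1 - x0). split; [lra |]. intros h Hh. lra. Qed.

Lemma inward_minus m x0 : m < x0 <= m + 1 -> inward m x0 (-1).
Proof. intros H. exists (x0 - m). split; [lra |]. intros h Hh. lra. Qed.

Lemma inward_exists m x0 : m <= x0 <= m + 1 -> exists s, s * s = 1 /\ inward m x0 s.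
Proof.
  intros H. destruct (Rlt_or_le x0 (m + 1)).
  - exists 1. split; [ring | apply inward_plus; lra].
  - exists (-1). split; [ring | apply inward_minus; lra].
Qed.

Lemma inward_corner m x0 : m <= x0 <= m + 1 ->
  (inward m x0 1 -> inward m x0 (-1) -> False) ->
  exists s, (s = 1 \/ s = -1) /\ x0 = m + (1 - s) / 2 /\ inward m x0 s.
Proof.
  intros H Hboth. destruct (Req_dec x0 m) as [E | E].
  - exists 1. split; [auto | split; [lra | apply inward_plus; lra]].
  - destruct (Req_dec x0 (m + 1)) as [E' | E'].
    + exists (-1). split; [auto | split; [lra | apply inward_minus; lra]].
    + exfalso. apply Hboth; [apply inward_plus | apply inward_minus]; lra.
Qed.

Lemma cone_nonneg m n x0 y0 u1 u2 v1 v2 sx sy :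
  (forall dx dy, m < x0 + dx < m + 1 -> n < y0 + dy < n + 1 -> dx * dx + dy * dy < 1 ->
     0 <= dx * u1 + dy * v1 /\ 0 <= dx * u2 + dy * v2) ->
  sx * sx = 1 -> sy * sy = 1 -> inward m x0 sx -> inward n y0 sy ->
  0 <= sx * u1 /\ 0 <= sx * u2 /\ 0 <= sy * v1 /\ 0 <= sy * v2.
Proof.
  intros H Sx Sy [dx [Hdx Ix]] [dy [Hdy Iy]].
  set (d := Rmin (Rmin dx dy) (1 / 2)).
  assert (Hd : 0 < d) by (apply Rmin_pos; [apply Rmin_pos |]; lra).
  assert (D : d <= dx /\ d <= dy /\ d <= 1 / 2).
  { unfold d. pose proof (Rmin_l (Rmin dx dy) (1 / 2)). pose proof (Rmin_r (Rmin dx dy) (1 / 2)).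
    pose proof (Rmin_l dx dy). pose proof (Rmin_r dx dy). lra. }
  assert (Hhk : forall h k, 0 < h < d -> 0 < k < d ->
            0 <= h * (sx * u1) + k * (sy * v1) /\ 0 <= h * (sx * u2) + k * (sy * v2)).
  { intros h k Hh Hk.
    destruct (H (sx * h) (sy * k)) as [H1 H2].
    - apply Ix. lra.
    - apply Iy. lra.
    - replace (sx * h * (sx * h) + sy * k * (sy * k)) with (h * h + k * k) by
        (transitivity ((sx * sx) * (h * h) + (sy * sy) * (k * k)); [rewrite Sx, Sy |]; ring).
      nra.
    - split; lra. }
  destruct (nonneg_of_small_combinations (sx * u1) (sy * v1) d Hd) as [A1 A2];
    [intros; apply Hhk; assumption |].
  destruct (nonneg_of_small_combinations (sx * u2) (sy * v2) d Hd) as [A3 A4];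
    [intros; apply Hhk; assumption |].
  repeat split; assumption.
Qed.

Lemma orthonormal_nonneg U1 U2 V1 V2 : orthonormal U1 U2 V1 V2 ->
  0 <= U1 -> 0 <= U2 -> 0 <= V1 -> 0 <= V2 ->
  (U1 = 1 /\ U2 = 0 /\ V1 = 0 /\ V2 = 1) \/ (U1 = 0 /\ U2 = 1 /\ V1 = 1 /\ V2 = 0).
Proof.
  intros [Hu [Hv Huv]] ? ? ? ?.
  assert (E : U1 * V1 = 0) by nra.
  apply Rmult_integral in E as [E | E]; subst.
  - right. assert (U2 = 1) by nra. subst. assert (V2 = 0) by nra. subst.
    assert (V1 = 1) by nra. auto.
  - left. assert (V2 = 1) by nra. subst. assert (U2 = 0) by nra. subst.
    assert (U1 = 1) by nra. auto.
Qed.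

Lemma corner_cone m n x0 y0 u1 u2 v1 v2 : orthonormal u1 u2 v1 v2 ->
  m <= x0 <= m + 1 -> n <= y0 <= n + 1 ->
  (forall dx dy, m < x0 + dx < m + 1 -> n < y0 + dy < n + 1 -> dx * dx + dy * dy < 1 ->
     0 <= dx * u1 + dy * v1 /\ 0 <= dx * u2 + dy * v2) ->
  exists sx sy, (sx = 1 \/ sx = -1) /\ (sy = 1 \/ sy = -1) /\
    x0 = m + (1 - sx) / 2 /\ y0 = n + (1 - sy) / 2 /\
    ((u1 = sx /\ u2 = 0 /\ v1 = 0 /\ v2 = sy) \/ (u1 = 0 /\ u2 = sx /\ v1 = sy /\ v2 = 0)).
Proof.
  intros Horth Hx Hy Hcone. pose proof Horth as [Hu [Hv Huv]].
  destruct (inward_exists _ _ Hx) as [sx0 [Sx0 Ix0]].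
  destruct (inward_exists _ _ Hy) as [sy0 [Sy0 Iy0]].
  destruct (inward_corner _ _ Hx) as [sx [Sx [Ex Ix]]].
  { intros Ip Im.
    destruct (cone_nonneg _ _ _ _ _ _ _ _ 1 sy0 Hcone ltac:(ring) Sy0 Ip Iy0) as [? [? _]].
    destruct (cone_nonneg _ _ _ _ _ _ _ _ (-1) sy0 Hcone ltac:(ring) Sy0 Im Iy0) as [? [? _]].
    assert (u1 = 0) by lra. assert (u2 = 0) by lra. subst. lra. }
  destruct (inward_corner _ _ Hy) as [sy [Sy [Ey Iy]]].
  { intros Ip Im.
    destruct (cone_nonneg _ _ _ _ _ _ _ _ sx0 1 Hcone Sx0 ltac:(ring) Ix0 Ip) as [_ [_ ?]].
    destruct (cone_nonneg _ _ _ _ _ _ _ _ sx0 (-1) Hcone Sx0 ltac:(ring) Ix0 Im) as [_ [_ ?]].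
    assert (v1 = 0) by lra. assert (v2 = 0) by lra. subst. lra. }
  exists sx, sy. do 4 (split; [assumption |]).
  assert (Sx2 : sx * sx = 1) by (destruct Sx; subst; ring).
  assert (Sy2 : sy * sy = 1) by (destruct Sy; subst; ring).
  destruct (cone_nonneg _ _ _ _ _ _ _ _ sx sy Hcone Sx2 Sy2 Ix Iy) as [A1 [A2 [A3 A4]]].
  assert (Hs : orthonormal (sx * u1) (sx * u2) (sy * v1) (sy * v2)).
  { repeat split.
    - transitivity (sx * sx * (u1 * u1 + u2 * u2)); [ring | rewrite Sx2, Hu; ring].
    - transitivity (sy * sy * (v1 * v1 + v2 * v2)); [ring | rewrite Sy2, Hv; ring].
    - transitivity (sx * sy * (u1 * v1 + u2 * v2)); [ring | rewrite Huv; ring]. }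
  destruct Sx, Sy; subst sx sy;
    destruct (orthonormal_nonneg _ _ _ _ Hs A1 A2 A3 A4) as [[? [? [? ?]]] | [? [? [? ?]]]];
    [left | right | left | right | left | right | left | right]; lra.
Qed.

Definition shift (X Y : Z) (p : point) : point := (fst p - IZR X, snd p - IZR Y).

Lemma corner_alignment f (m n cx cy : Z) (w : point) : isometry f ->
  unit_square (IZR m) (IZR n) w -> f w = (IZR cx, IZR cy) ->
  (forall r, open_square (IZR m) (IZR n) r -> dist2 w r < 1 ->
     IZR cx <= fst (f r) /\ IZR cy <= snd (f r)) ->
  (exists X Y : Z, forall q, tooth q <-> tooth (shift X Y (f q))) /\
  f (IZR m + / 2, IZR n + / 2) = (IZR cx + / 2, IZR cy + / 2).
Proof.
  intros Hiso Hw Hfw Hquad.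
  destruct (isometry_affine f Hiso) as [b1 [b2 [u1 [u2 [v1 [v2 [Horth Hf]]]]]]].
  destruct w as [x0 y0]. rewrite Hf in Hfw. simpl in Hfw. injection Hfw as Hb1 Hb2.
  destruct Hw as [Hx0 Hy0]; simpl in Hx0, Hy0.
  destruct (corner_cone _ _ _ _ _ _ _ _ Horth Hx0 Hy0) as [sx [sy [Sx [Sy [Ex [Ey Huv]]]]]].
  { intros dx dy Hdx Hdy Hd.
    destruct (Hquad (x0 + dx, y0 + dy)) as [Q1 Q2].
    - split; assumption.
    - unfold dist2; simpl. lra.
    - rewrite Hf in Q1, Q2. simpl in Q1, Q2. split; nra. }
  (* With [M] the signed permutation matrix with columns [u], [v], we have
     [f q = c + (1/2,1/2) + M (q - (m,n) - (1/2,1/2))], and [M] preserves the tooth about its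
     centre. *)
  assert (Htooth : forall q, tooth q <->
    tooth (fst (f q) - (IZR cx - (IZR m * u1 + IZR n * v1)),
           snd (f q) - (IZR cy - (IZR m * u2 + IZR n * v2)))).
  { intros q. rewrite Hf, !tooth_bars. unfold closed_box; simpl.
    destruct Sx, Sy, Huv as [[? [? [? ?]]] | [? [? [? ?]]]]; subst; split; intros; lra. }
  split.
  - assert (Hsign : forall s, s = 1 \/ s = -1 -> exists k, s = IZR k)
      by (intros s [-> | ->]; eexists; reflexivity).
    assert (Hk : exists k1 k2 k3 k4, u1 = IZR k1 /\ u2 = IZR k2 /\ v1 = IZR k3 /\ v2 = IZR k4).
    { destruct (Hsign sx Sx) as [kx ->], (Hsign sy Sy) as [ky ->].
      destruct Huv as [[-> [-> [-> ->]]] | [-> [-> [-> ->]]]];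
        eexists _, _, _, _; repeat split. }
    destruct Hk as [k1 [k2 [k3 [k4 [-> [-> [-> ->]]]]]]].
    exists (cx - (m * k1 + n * k3))%Z, (cy - (m * k2 + n * k4))%Z.
    intros q. rewrite Htooth. unfold shift. rewrite !minus_IZR, !plus_IZR, !mult_IZR.
    reflexivity.
  - rewrite Hf. simpl. f_equal;
      destruct Sx, Sy, Huv as [[? [? [? ?]]] | [? [? [? ?]]]]; subst; lra.
Qed.

Definition frequently (P : nat -> Prop) : Prop := forall N, exists n, (N <= n)%nat /\ P n.

Lemma frequently_pigeonhole (B : nat) (P : nat -> Z -> Prop) :
  frequently (fun n => exists k, (0 <= k < Z.of_nat B)%Z /\ P n k) ->
  exists k, frequently (fun n => P n k).
Proof.
  induction B as [| B IH]; intros H.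
  - destruct (H 0%nat) as [n [_ [k [Hk _]]]]. lia.
  - destruct (classic (frequently (fun n => P n (Z.of_nat B)))) as [Hlast | Hlast];
      [eauto |].
    apply IH. unfold frequently in Hlast.
    apply not_all_ex_not in Hlast as [N0 HN0].
    intros N. destruct (H (Nat.max N N0)) as [n [Hn [k [Hk Pk]]]].
    exists n. split; [lia |]. exists k. split; [| exact Pk].
    destruct (Z.eq_dec k (Z.of_nat B)) as [-> | Hne]; [| lia].
    exfalso. apply HN0. exists n. split; [lia | exact Pk].
Qed.

Definition grid_index (x : R) : Z := up (4 * x).

Lemma grid_index_close x y : grid_index x = grid_index y -> - / 4 < x - y < / 4.
Proof.
  unfold grid_index. intros E.
  destruct (archimed (4 * x)) as [A B]. destruct (archimed (4 * y)) as [C D].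
  rewrite E in A, B. lra.
Qed.

Lemma grid_index_bounds x : -4 < x < 4 -> (0 <= grid_index x + 16 < 33)%Z.
Proof.
  unfold grid_index. intros H. destruct (archimed (4 * x)) as [A B].
  assert (-16 < up (4 * x))%Z by (apply lt_IZR; lra).
  assert (up (4 * x) < 17)%Z by (apply lt_IZR; lra).
  lia.
Qed.

Lemma inv_INR_small e : 0 < e -> exists N, forall n, (N <= n)%nat -> / (INR n + 2) < e.
Proof.
  intros He. destruct (INR_archimed 1 (/ e) ltac:(lra)) as [N HN]. rewrite Rmult_1_r in HN.
  exists N. intros n Hn. apply le_INR in Hn.
  rewrite <- (Rinv_inv e). apply Rinv_lt_contravar.
  - apply Rmult_lt_0_compat; [apply Rinv_0_lt_compat; lra | pose proof (pos_INR n); lra].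
  - lra.
Qed.

Definition tiling (T : point -> Prop) (I : Type) (f : I -> point -> point) : Prop :=
  (forall i, isometry (f i)) /\
  (forall p, exists i, image (f i) T p) /\
  (forall i j p, i <> j -> interior (image (f i) T) p -> interior (image (f j) T) p -> False).

Lemma interior_mono (A B : point -> Prop) p :
  (forall q, A q -> B q) -> interior A p -> interior B p.
Proof. intros HAB [e [He Hball]]. exists e. split; [exact He |]. auto. Qed.

Lemma tiling_compose T I f g : tiling T I f -> isometry g -> tiling T I (fun i p => g (f i p)).
Proof.
  intros [Hiso [Hcov Hdis]] Hg.
  destruct (isometry_inverse g Hg) as [h [_ Hinv]]. pose proof Hinv as [Hgh _].
  assert (Hpull : forall i p, interior (image (fun q => g (f i q)) T) p ->
                              interior (image (f i) T) (h p)).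
  { intros i p Hp. apply (interior_image_inv g h _ _ Hg Hinv).
    revert Hp. apply interior_mono. intros q [r [Tr <-]].
    exists (f i r). split; [exists r; auto | reflexivity]. }
  split; [| split].
  - intros i p q. rewrite Hg. apply Hiso.
  - intros p. destruct (Hcov (h p)) as [i [q [Tq Eq]]].
    exists i, q. split; [exact Tq |]. rewrite Eq. apply Hgh.
  - intros i j p Hij Hi Hj. exact (Hdis i j (h p) Hij (Hpull i p Hi) (Hpull j p Hj)).
Qed.

Definition tile {I} (f : I -> point -> point) (i : I) : point -> Prop := image (f i) tooth.

Definition aligned {I} (f : I -> point -> point) (j : I) (X Y : Z) : Prop :=
  forall p, tile f j p <-> tooth (shift X Y p).

Lemma dist2_shift X Y p q : dist2 (shift X Y p) (shift X Y q) = dist2 p q.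
Proof. unfold dist2, shift. simpl. ring. Qed.

Lemma open_bars_tooth p : open_bars p -> tooth p.
Proof. rewrite tooth_bars. unfold open_bars, open_box, closed_box. lra. Qed.

Lemma open_bars_ball w : open_bars w ->
  exists e, 0 < e /\ forall q, dist2 w q < e ^ 2 -> open_bars q.
Proof.
  intros [Hw | Hw]; destruct (open_box_ball _ _ _ _ _ Hw) as [e [He Hball]];
    exists e; split; auto; intros q Hq; [left | right]; auto.
Qed.

Lemma near_corner q (cx cy : Z) : dist2 q (IZR cx, IZR cy) < 1 ->
  IZR cx - 1 < fst q < IZR cx + 1 /\ IZR cy - 1 < snd q < IZR cy + 1.
Proof.
  intros H. assert (H1 : dist2 q (IZR cx, IZR cy) < 1 ^ 2) by lra.
  apply dist2_lt_coords in H1; [cbn [fst snd] in H1; lra | lra].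
Qed.

Section ToothTiling.

Variables (I : Type) (f : I -> point -> point).
Hypothesis HT : tiling tooth I f.

Let tiling_isometry : forall i, isometry (f i) := proj1 HT.
Let tiling_cover : forall p, exists i, tile f i p := proj1 (proj2 HT).
Let tiling_disjoint :
  forall i j p, i <> j -> interior (tile f i) p -> interior (tile f j) p -> False :=
  proj2 (proj2 HT).

Lemma tile_centre_ball j w : dist2 (f j tooth_centre) w < 1 / 4 -> tile f j w.
Proof.
  intros Hw. destruct (isometry_inverse _ (tiling_isometry j)) as [g [_ Hinv]].
  apply (image_inverses _ _ _ _ Hinv), centre_ball_in_tooth.
  destruct Hinv as [Hfg _]. rewrite <- (tiling_isometry j), Hfg. exact Hw.
Qed.

Lemma tile_near_centre j p : tile f j p -> dist2 (f j tooth_centre) p < 9.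
Proof.
  intros [r [Tr <-]]. rewrite (tiling_isometry j). exact (tooth_near_centre r Tr).
Qed.

Lemma centre_near_interior j z : dist2 (f j tooth_centre) z < 1 / 16 -> interior (tile f j) z.
Proof.
  intros Hz. exists (1 / 4). split; [lra |]. intros w Hw. apply tile_centre_ball.
  replace (1 / 4) with (4 * (1 / 16)) by field.
  apply (dist2_triangle4 _ z); [exact Hz | simpl in Hw; lra].
Qed.

Lemma tile_centres_apart j k : j <> k -> 1 / 4 <= dist2 (f j tooth_centre) (f k tooth_centre).
Proof.
  intros Hjk. apply Rnot_lt_le. intros Hd.
  set (zj := f j tooth_centre) in *. set (zk := f k tooth_centre) in *.
  set (mid := ((fst zj + fst zk) / 2, (snd zj + snd zk) / 2)).
  assert (Mj : dist2 zj mid = dist2 zj zk / 4) by (unfold mid, dist2; simpl; field).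
  assert (Mk : dist2 zk mid = dist2 zj zk / 4) by (unfold mid, dist2; simpl; field).
  apply (tiling_disjoint j k mid Hjk); apply centre_near_interior; fold zj zk; lra.
Qed.

Lemma frequent_tile (c : point) (p : nat -> point) : (forall n, dist2 c (p n) < 1) ->
  exists j, frequently (fun n => tile f j (p n)).
Proof.
  intros Hp.
  (* tiles are indexed by the cell of a grid of mesh 1/4 containing their centre *)
  set (gx := fun j => (grid_index (fst (f j tooth_centre) - fst c) + 16)%Z).
  set (gy := fun j => (grid_index (snd (f j tooth_centre) - snd c) + 16)%Z).
  assert (Hinj : forall j k, gx j = gx k -> gy j = gy k -> j = k).
  { intros j k Ex Ey. apply NNPP. intros Hne. apply (tile_centres_apart j k) in Hne.
    unfold gx, gy in Ex, Ey.
    apply Z.add_cancel_r, grid_index_close in Ex. apply Z.add_cancel_r, grid_index_close in Ey.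
    unfold dist2 in Hne. simpl in Hne. nra. }
  assert (Hcov : forall n, exists j, tile f j (p n) /\ (0 <= gx j < 33)%Z /\ (0 <= gy j < 33)%Z).
  { intros n. destruct (tiling_cover (p n)) as [j Hj]. exists j. split; [exact Hj |].
    pose proof (tile_near_centre j _ Hj) as Hc. replace 9 with (3 ^ 2) in Hc by ring.
    apply dist2_lt_coords in Hc; [| lra].
    pose proof (Hp n) as Hn. replace 1 with (1 ^ 2) in Hn by ring.
    apply dist2_lt_coords in Hn; [| lra].
    split; apply grid_index_bounds; lra. }
  destruct (frequently_pigeonhole 33 (fun n a => exists b, (0 <= b < 33)%Z /\
              exists j, tile f j (p n) /\ gx j = a /\ gy j = b)) as [a Ha].
  { intros N. exists N. split; [lia |]. destruct (Hcov N) as [j [Hj [Hx Hy]]].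
    exists (gx j). split; [exact Hx |]. exists (gy j). split; [exact Hy |]. eauto. }
  destruct (frequently_pigeonhole 33 (fun n b => exists j, tile f j (p n) /\ gx j = a /\ gy j = b))
    as [b Hb]; [exact Ha |].
  destruct (Hb 0%nat) as [n0 [_ [j0 [_ [Ea0 Eb0]]]]].
  exists j0. intros N. destruct (Hb N) as [n [Hn [j [Hj [Ea Eb]]]]].
  exists n. split; [exact Hn |]. replace j0 with j; [exact Hj |].
  apply Hinj; congruence.
Qed.

Lemma corner_tile (cx cy : Z) : exists j r,
  open_square (IZR cx) (IZR cy) r /\ tile f j r /\ tile f j (IZR cx, IZR cy).
Proof.
  set (c := (IZR cx, IZR cy)).
  set (d := fun n : nat => / (INR n + 2)).
  set (p := fun n => (IZR cx + d n, IZR cy + d n)).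
  assert (Hd : forall n, 0 < d n <= / 2).
  { intros n. unfold d. pose proof (pos_INR n). split.
    - apply Rinv_0_lt_compat. lra.
    - apply Rinv_le_contravar; lra. }
  assert (Hpc : forall n, dist2 c (p n) = 2 * d n ^ 2) by (intros n; unfold dist2; simpl; ring).
  destruct (frequent_tile c p) as [j Hj].
  { intros n. rewrite Hpc. pose proof (Hd n). nra. }
  destruct (Hj 0%nat) as [n0 [_ Hn0]].
  exists j, (p n0). split; [| split; [exact Hn0 |]].
  { pose proof (Hd n0). unfold open_square, open_box; simpl. lra. }
  destruct (isometry_inverse _ (tiling_isometry j)) as [g [Hg Hinv]].
  apply (image_inverses _ _ _ _ Hinv), tooth_closed.
  intros e He. destruct (inv_INR_small (e / 2)) as [N HN]; [lra |].
  destruct (Hj N) as [n [Hn Tn]]. exists (g (p n)). split.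
  - exact (proj1 (image_inverses _ _ _ _ Hinv) Tn).
  - rewrite Hg, Hpc. specialize (HN n Hn). pose proof (Hd n). unfold d in *. nra.
Qed.

Definition walled (cx cy : Z) : Prop :=
  forall j r q, open_square (IZR cx) (IZR cy) r -> tile f j r -> interior (tile f j) q ->
    dist2 q (IZR cx, IZR cy) < 1 -> IZR cx <= fst q /\ IZR cy <= snd q.

Lemma walled_corner_aligned cx cy : walled cx cy ->
  exists j X Y, aligned f j X Y /\ tooth_cell (cx - X) (cy - Y).
Proof.
  intros Hwall. destruct (corner_tile cx cy) as [j [r0 [Hr0 [Tr0 Tc]]]].
  pose proof (tiling_isometry j) as Hiso.
  destruct (isometry_inverse _ Hiso) as [g [_ Hinv]]. pose proof Hinv as [Hfg _].
  set (w := g (IZR cx, IZR cy)).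
  assert (Tw : tooth w) by exact (proj1 (image_inverses _ _ _ _ Hinv) Tc).
  destruct (tooth_unit_square w Tw) as [m [n [Sw Hsub]]].
  destruct (corner_alignment (f j) m n cx cy w Hiso Sw (Hfg _)) as [[X [Y HXY]] Hcentre].
  { intros r Hr Hd. apply (Hwall j r0 (f j r) Hr0 Tr0).
    - apply (interior_image _ g _ _ Hiso Hinv).
      destruct (open_box_ball _ _ _ _ _ Hr) as [e [He Hball]]. exists e. split; [exact He |].
      intros q Hq. apply Hsub. destruct (Hball q Hq). unfold unit_square. lra.
    - replace (IZR cx, IZR cy) with (f j w) by apply Hfg.
      rewrite Hiso, dist2_sym. exact Hd. }
  exists j, X, Y. split.
  - intros p. unfold tile. rewrite (image_inverses _ _ _ _ Hinv), HXY, Hfg. reflexivity.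
  - apply (tooth_cell_of_open_square _ _ (shift X Y (IZR cx + / 2, IZR cy + / 2))).
    + rewrite <- Hcentre, <- HXY. apply Hsub. unfold unit_square; simpl; lra.
    + unfold open_square, open_box, shift; simpl. rewrite !minus_IZR. lra.
Qed.

Lemma aligned_interior j X Y p : aligned f j X Y -> open_bars (shift X Y p) ->
  interior (tile f j) p.
Proof.
  intros Ha Hp. destruct (open_bars_ball _ Hp) as [e [He Hball]].
  exists e. split; [exact He |]. intros q Hq.
  apply Ha, open_bars_tooth, Hball. rewrite dist2_shift. exact Hq.
Qed.

Lemma aligned_tile_cell j X Y (a b : Z) r : aligned f j X Y -> tile f j r ->
  open_square (IZR a) (IZR b) r -> tooth_cell (a - X) (b - Y).
Proof.
  intros Ha Tr Hr. apply Ha in Tr. apply (tooth_cell_of_open_square _ _ _ Tr).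
  unfold open_square, open_box, shift in *; simpl. rewrite !minus_IZR. lra.
Qed.

Lemma aligned_cell_interior j X Y (a b : Z) : aligned f j X Y -> tooth_cell (a - X) (b - Y) ->
  interior (tile f j) (IZR a + / 2, IZR b + / 2).
Proof.
  intros Ha Hc. apply (aligned_interior _ X Y); [exact Ha |].
  replace (shift X Y (IZR a + / 2, IZR b + / 2)) with (IZR (a - X) + / 2, IZR (b - Y) + / 2)
    by (unfold shift; simpl; rewrite !minus_IZR; f_equal; ring).
  apply open_bars_of_tooth_cell. exact Hc.
Qed.

Lemma interior_meets_aligned j k X Y q : interior (tile f j) q -> aligned f k X Y ->
  tooth (shift X Y q) -> j = k.
Proof.
  intros Iq Ha Tq. apply NNPP. intros Hjk.
  destruct (interior_open _ _ Iq) as [e [He Hball]].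
  (* the tooth is the closure of its open bars, so the interiors of both tiles meet near [q] *)
  assert (Hbar : exists q', open_bars q' /\ dist2 (shift X Y q) q' < e ^ 2).
  { apply tooth_bars in Tq as [Tq | Tq].
    - destruct (closed_box_approx (-2) 3 0 1 _ e ltac:(lra) ltac:(lra) Tq He) as [q' [Hq' Hd]].
      exists q'. split; [left |]; assumption.
    - destruct (closed_box_approx 0 1 (-2) 3 _ e ltac:(lra) ltac:(lra) Tq He) as [q' [Hq' Hd]].
      exists q'. split; [right |]; assumption. }
  destruct Hbar as [q' [Hq' Hd]].
  set (q'' := (fst q' + IZR X, snd q' + IZR Y)).
  assert (Eq : shift X Y q'' = q') by (unfold shift, q''; destruct q'; simpl; f_equal; ring).
  apply (tiling_disjoint j k q'' Hjk).
  - apply Hball. rewrite <- dist2_shift with (X := X) (Y := Y), Eq. exact Hd.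
  - apply (aligned_interior _ X Y); [exact Ha | rewrite Eq; exact Hq'].
Qed.

Lemma aligned_same_tile j k X Y X' Y' (a b : Z) : aligned f j X Y -> aligned f k X' Y' ->
  tooth_cell (a - X) (b - Y) -> tooth_cell (a - X') (b - Y') -> j = k.
Proof.
  intros Hj Hk Cj Ck. apply NNPP. intros Hjk.
  exact (tiling_disjoint j k _ Hjk (aligned_cell_interior _ _ _ _ _ Hj Cj)
           (aligned_cell_interior _ _ _ _ _ Hk Ck)).
Qed.

Lemma aligned_cell_transfer j X Y X' Y' (a b : Z) : aligned f j X Y -> aligned f j X' Y' ->
  tooth_cell (a - X) (b - Y) -> tooth_cell (a - X') (b - Y').
Proof.
  intros H H' Hc. apply (aligned_tile_cell j X' Y' a b (IZR a + / 2, IZR b + / 2) H').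
  - destruct (aligned_cell_interior _ _ _ _ _ H Hc) as [e [He Hball]].
    apply Hball. replace (dist2 _ _) with 0 by (unfold dist2; ring). apply pow_lt. exact He.
  - unfold open_square, open_box; simpl. lra.
Qed.

Lemma aligned_cells_disjoint j k X Y X' Y' (cx cy : Z) : aligned f j X Y -> aligned f k X' Y' ->
  tooth_cell (cx - X) (cy - Y) -> ~ tooth_cell (cx - X') (cy - Y') ->
  forall a b, tooth_cell (a - X) (b - Y) -> tooth_cell (a - X') (b - Y') -> False.
Proof.
  intros Hj Hk C N a b A B.
  pose proof (aligned_same_tile _ _ _ _ _ _ _ _ Hj Hk A B). subst k.
  exact (N (aligned_cell_transfer _ _ _ _ _ _ _ Hj Hk C)).
Qed.

Lemma walled_by_aligned cx cy :
  (forall q, dist2 q (IZR cx, IZR cy) < 1 -> ~ (IZR cx <= fst q /\ IZR cy <= snd q) ->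
     exists k X Y, aligned f k X Y /\ ~ tooth_cell (cx - X) (cy - Y) /\ tooth (shift X Y q)) ->
  walled cx cy.
Proof.
  intros H j r q Hr Tr Iq Hq. apply NNPP. intros Hout.
  destruct (H q Hq Hout) as [k [X [Y [Ha [Hc Tq]]]]].
  pose proof (interior_meets_aligned _ _ _ _ _ Iq Ha Tq). subst k.
  exact (Hc (aligned_tile_cell _ _ _ _ _ _ Ha Tr Hr)).
Qed.

(** * Forcing the tiles around the standard tooth *)

Ltac wall_by k X Y :=
  exists k, X, Y; split; [assumption | split;
    [unfold tooth_cell; lia | apply tooth_bars; unfold shift, closed_box; cbn [fst snd]; lra]].

Lemma neighbour_of_standard_tooth i0 : aligned f i0 0 0 ->
  exists j, aligned f j 3 1 \/ aligned f j 1 3.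
Proof.
  intros H0.
  destruct (walled_corner_aligned 1 1) as [j [X [Y [Hj Cj]]]].
  { apply walled_by_aligned. intros q Hq Hout. apply near_corner in Hq.
    wall_by i0 0%Z 0%Z. }
  pose proof (aligned_cells_disjoint _ _ _ _ _ _ 1 1 Hj H0 Cj ltac:(unfold tooth_cell; lia)) as D.
  pose proof (D 2 0)%Z. pose proof (D 1 0)%Z. pose proof (D 0 1)%Z.
  assert ((X = 3 /\ Y = 1) \/ (X = 1 /\ Y = 3))%Z as [[-> ->] | [-> ->]]
    by (unfold tooth_cell in *; lia); eauto.
Qed.

Lemma standard_tooth_no_neighbour_31 i0 j1 : aligned f i0 0 0 -> aligned f j1 3 1 -> False.
Proof.
  intros A0 A1.
  destruct (walled_corner_aligned 1 2) as [j2 [X [Y [A2 C2]]]].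
  { apply walled_by_aligned. intros q Hq Hout. apply near_corner in Hq.
    destruct (Rlt_or_le (fst q) 1); [wall_by i0 0%Z 0%Z | wall_by j1 3%Z 1%Z]. }
  pose proof (aligned_cells_disjoint _ _ _ _ _ _ 1 2 A2 A0 C2 ltac:(unfold tooth_cell; lia)) as D0.
  pose proof (aligned_cells_disjoint _ _ _ _ _ _ 1 2 A2 A1 C2 ltac:(unfold tooth_cell; lia)) as D1.
  pose proof (D0 2 0)%Z. pose proof (D0 0 2)%Z. pose proof (D0 1 0)%Z.
  pose proof (D1 3 2)%Z. pose proof (D1 1 1)%Z.
  assert (X = 1 /\ Y = 4)%Z as [-> ->] by (unfold tooth_cell in *; lia).
  destruct (walled_corner_aligned 2 2) as [j3 [X3 [Y3 [A3 C3]]]].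
  { apply walled_by_aligned. intros q Hq Hout. apply near_corner in Hq.
    destruct (Rlt_or_le (snd q) 2); [wall_by j1 3%Z 1%Z | wall_by j2 1%Z 4%Z]. }
  pose proof (aligned_cells_disjoint _ _ _ _ _ _ 2 2 A3 A1 C3 ltac:(unfold tooth_cell; lia)) as E1.
  pose proof (aligned_cells_disjoint _ _ _ _ _ _ 2 2 A3 A2 C3 ltac:(unfold tooth_cell; lia)) as E2.
  pose proof (E1 3 2)%Z. pose proof (E1 2 1)%Z. pose proof (E2 1 2)%Z. pose proof (E2 1 4)%Z.
  unfold tooth_cell in *. lia.
Qed.

End ToothTiling.

Definition swap (p : point) : point := (snd p, fst p).

Lemma swap_isometry : isometry swap.
Proof. intros p q. unfold dist2, swap. simpl. ring. Qed.

Lemma aligned_swap I (f : I -> point -> point) j X Y :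
  aligned f j X Y -> aligned (fun i p => swap (f i p)) j Y X.
Proof.
  intros H p.
  assert (E : tile (fun i p => swap (f i p)) j p <-> tile f j (swap p)).
  { split.
    - intros [q [Tq <-]]. exists q. split; [exact Tq | destruct (f j q); reflexivity].
    - intros [q [Tq Eq]]. exists q. split; [exact Tq | rewrite Eq; destruct p; reflexivity]. }
  rewrite E, (H (swap p)). unfold shift, swap. cbn [fst snd]. apply tooth_swap.
Qed.

Lemma tiling_normalize I (f : I -> point -> point) i0 : tiling tooth I f ->
  exists g, tiling tooth I (fun i p => g (f i p)) /\ aligned (fun i p => g (f i p)) i0 0 0.
Proof.
  intros HT. destruct (isometry_inverse _ (proj1 HT i0)) as [g [Hg [_ Hgf]]].
  exists g. split; [exact (tiling_compose _ _ _ _ HT Hg) |].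
  intros p. unfold tile, shift. rewrite !Rminus_0_r. destruct p as [x y]. split.
  - intros [q [Tq <-]]. rewrite Hgf. exact Tq.
  - intros Tp. exists (x, y). split; [exact Tp | apply Hgf].
Qed.

Theorem lemma2p1 : ~ tiles_plane tooth.
Proof.
  intros [I [f HT]].
  destruct (proj1 (proj2 HT) (0, 0)) as [i0 _].
  destruct (tiling_normalize I f i0 HT) as [g [HTg H0]].
  destruct (neighbour_of_standard_tooth _ _ HTg i0 H0) as [j [H1 | H1]].
  - exact (standard_tooth_no_neighbour_31 _ _ HTg i0 j H0 H1).
  - apply (standard_tooth_no_neighbour_31 _ _ (tiling_compose _ _ _ _ HTg swap_isometry) i0 j);
      apply aligned_swap; assumption.
Qed.
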